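(* Let $\ell,k,t$ be positive integers, let $\mathbb{F}$ be a finite field, and let $b$ be an integer with $b>\ell/k$. There is a $t$-private $k$-server linear HSS for $\mathsf{CONCAT}_\ell(\mathbb{F})$ in which every output share lies in $\mathbb{F}^b$ (hence with download rate $\ell/(kb)$) if and only if there is an $\mathbb{F}$-linear code $C\subseteq(\mathbb{F}^b)^k$ with rate at least $\ell/(kb)$ and distance at least $t+1$. Moreover, in the ''if'' direction, the HSS can be taken to use $t$-private $k$-party CNF sharing as its $\mathsf{Share}$ function and to have upload cost $k\ell\binom{k-1}{t}\log_2|\mathbb{F}|$.
   Context: A $k$-server HSS for a class $\mathcal{F}$ of functions $f:\mathcal{X}^m\to\mathcal{Y}$ is a triple $(\mathsf{Share},\mathsf{Eval},\mathsf{Rec})$: the randomized $\mathsf{Share}$ maps $x\in\mathcal{X}$ to input shares $(x^{(1)},\dots,x^{(k)})$, each of the $m$ inputs being shared independently; server $j$ computes the output share $y^{(j)}=\mathsf{Eval}(f,j,(x_1^{(j)},\dots,x_m^{(j)}))$; and $\mathsf{Rec}(y^{(1)},\dots,y^{(k)})$ must equal $f(x_1,\dots,x_m)$ with probability 1. It is $t$-private if for every $T\subseteq[k]$ with $|T|\le t$ and all $x,x'\in\mathcal{X}$ the distribution of $(x^{(j)})_{j\in T}$ is the same under $\mathsf{Share}(x)$ and $\mathsf{Share}(x')$. For an object $w$ in a finite domain $\mathcal W$, $|w|=\log_2|\mathcal W|$. Upload cost $=\sum_{i,j}|x_i^{(j)}|$; download cost $=\sum_j|y^{(j)}|$; download rate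 $=\log_2|\mathcal{Y}|/\text{download cost}$. The HSS is linear (over $\mathbb{F}$) if $\mathcal{X}=\mathbb{F}$, $\mathsf{Share}(x,\mathbf{r})$ is $\mathbb{F}$-linear in $x$ and a uniformly random vector $\mathbf{r}$ over $\mathbb{F}$, $\mathcal{Y}=\mathbb{F}^{b'}$, each output share lies in some $\mathbb{F}^{b_j}$, and $\mathsf{Rec}$ is $\mathbb{F}$-linear ($\mathsf{Eval}$ need not be linear). $\mathsf{CONCAT}_\ell(\mathcal{X})$ is the class consisting of the single identity function $\mathcal{X}^\ell\to\mathcal{X}^\ell$, with $m=\ell$ inputs each shared independently. The $t$-private $k$-party CNF sharing of $x\in\mathbb{F}$: choose uniformly random $x_T\in\mathbb{F}$ for each $T\subseteq[k]$ with $|T|=t$ subject to $\sum_T x_T=x$; party $j$ gets $(x_T)_{T:j\notin T}$. An $\mathbb{F}$-linear code $C\subseteq(\mathbb{F}^b)^k$ is an $\mathbb{F}$-subspace; rate $\dim_{\mathbb{F}}C/(bk)$; distance $\min_{c\ne c'\in C}|\{i: c_i\ne c'_i\}|$. *)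

From HB Require Import structures.
From mathcomp Require Import all_boot all_order all_algebra.
Set Implicit Arguments. Unset Strict Implicit. Unset Printing Implicit Defensive.
Import Order.TTheory GRing.Theory Num.Theory.
Local Open Scope ring_scope.

(* i.e. the most general map that is jointly F-linear in (x, r).      *)
Record linShare (F : fieldType) (k : nat) := LinShare {
  sh_rho : nat;
  sh_s : 'I_k -> nat;
  sh_a : forall j : 'I_k, 'rV[F]_(sh_s j);
  sh_B : forall j : 'I_k, 'M[F]_(sh_rho, sh_s j)
}.

Definition share (F : fieldType) (k : nat) (S : linShare F k) (j : 'I_k)
  (x : F) (r : 'rV[F]_(sh_rho S)) : 'rV[F]_(sh_s S j) :=
  x *: sh_a S j + r *m sh_B S j.
Arguments share {F k} S j x r.
Arguments sh_rho {F k} l.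
Arguments sh_s {F k} l j.
Arguments sh_a {F k} l j.
Arguments sh_B {F k} l j.

(* t-privacy: for every set T of at most t servers and all x, x', the
   joint distribution of (share j x r)_{j in T}, r uniform, is the same.
   Since r is uniform on a finite set, this is equality of the number of
   r producing each possible tuple of values (v j)_{j in T}. *)
Definition t_private (F : finFieldType) (k : nat) (S : linShare F k) (t : nat) : Prop :=
  forall T : {set 'I_k}, (#|T| <= t)%N ->
  forall (x x' : F) (v : forall j : 'I_k, 'rV[F]_(sh_s S j)),
    #|[set r : 'rV[F]_(sh_rho S) | [forall j in T, share S j x r == v j]]| =
    #|[set r : 'rV[F]_(sh_rho S) | [forall j in T, share S j x' r == v j]]|.

(* Correctness for CONCAT_l(F): the l inputs are shared independently
   (independent randomness r i); server j applies an arbitrary Eval to its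
   l input shares, producing an output share in F^b; Rec is an arbitrary
   F-linear map (F^b)^k -> F^l, written y |-> sum_j y_j *m R_j.
   Correctness with probability 1 over finite uniform randomness means
   correctness for every choice of randomness. *)
Definition concat_correct (F : fieldType) (k l b : nat) (S : linShare F k)
  (Ev : forall j : 'I_k, ('I_l -> 'rV[F]_(sh_s S j)) -> 'rV[F]_b)
  (Rc : 'I_k -> 'M[F]_(b, l)) : Prop :=
  forall (x : 'I_l -> F) (r : 'I_l -> 'rV[F]_(sh_rho S)),
    \sum_(j < k) (Ev j (fun i => share S j (x i) (r i)) *m Rc j)
      = \row_(i < l) x i.

Definition linHSS_concat (F : finFieldType) (k t l b : nat) (S : linShare F k)
  (Ev : forall j : 'I_k, ('I_l -> 'rV[F]_(sh_s S j)) -> 'rV[F]_b)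
  (Rc : 'I_k -> 'M[F]_(b, l)) : Prop :=
  t_private S t /\ concat_correct Ev Rc.
Arguments linHSS_concat {F k} t {l b} S Ev Rc.

(* 2 ^ (upload cost): upload cost = sum_{i,j} |x_i^(j)| with
   |w| = log2 |W|, so 2^(upload cost) = prod_{i,j} |F^(s j)|. *)
Definition upload_size (F : finFieldType) (k : nat) (S : linShare F k) (l : nat) : nat :=
  (\prod_(i < l) \prod_(j < k) #|{: 'rV[F]_(sh_s S j)}|)%N.

Definition tsub (k t : nat) := {T : {set 'I_k} | #|T| == t}.

(* the set of t-subsets not containing j: party j's share coordinates *)
Definition cnf_part (k t : nat) (j : 'I_k) : {set tsub k t} :=
  [set T : tsub k t | j \notin val T].

(* Randomness r indexed by all t-subsets; x_T := r_T for T <> T0 and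
   x_T0 := x - sum_{T <> T0} r_T, where T0 is a fixed t-subset.  The
   resulting (x_T)_T is uniform subject to sum_T x_T = x (the coordinate
   r_T0 is simply unused). *)
Definition cnf_share (F : fieldType) (k t : nat) : linShare F k :=
  @LinShare F k #|{: tsub k t}| (fun j => #|cnf_part t j|)
    (fun j => \row_(i < #|cnf_part t j|)
        (if [pick T : tsub k t] == Some (enum_val i) then 1 else 0))
    (fun j => \matrix_(m < #|{: tsub k t}|, i < #|cnf_part t j|)
        (if [pick T : tsub k t] == Some (enum_val i)
         then (if [pick T : tsub k t] == Some (enum_val m) then 0 else -1)
         else ((enum_val m == enum_val i)%:R))).

(* F-linear codes C <= (F^b)^k, seen as subspaces of k x b matrices  *)
(* (row i = i-th symbol in F^b).                                      *)
Definition code_rate (F : fieldType) (k b : nat) (C : {vspace 'M[F]_(k, b)}) : rat :=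
  ((\dim C)%:R / (b * k)%:R)%R.

Definition code_dist_ge (F : fieldType) (k b : nat) (C : {vspace 'M[F]_(k, b)}) (d : nat) : Prop :=
  forall c c' : 'M[F]_(k, b), c \in C -> c' \in C -> c != c' ->
    (d <= #|[set i : 'I_k | row i c != row i c']|)%N.

From HB Require Import structures.
From mathcomp Require Import all_boot all_order all_algebra.
From Stdlib Require Import FunctionalExtensionality.
Set Implicit Arguments. Unset Strict Implicit. Unset Printing Implicit Defensive.
Import Order.TTheory GRing.Theory Num.Theory.
Local Open Scope ring_scope.

(* Read through a functional x |-> x z^T, correctness says x z^T is the sum over
   the servers j of (their output) R_j z^T, so the matrix c(z) with rows z R_j^T
   records which servers the functional depends on.  If c(z) were supported on at
   most t servers, t-privacy would let those servers see the shares of 0, forcing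
   x z^T = 0 for every x, i.e. z = 0.  Hence z |-> c(z) is an injective linear map
   onto a code of dimension l and distance > t.
   Conversely, let the rows of G span an l-dimensional subcode of a code of
   distance > t.  Erasing the rows in a set T of at most t servers keeps G of full
   row rank, so every z in F^l is the reconstruction of an output vector vanishing
   on T.  Under CNF sharing x = sum_T x_T, and x_T is held exactly by the servers
   outside T, who jointly output such a lift of x_T; summing over T reconstructs x.
   CNF sharing is t-private since any t servers all miss the piece x_T of a t-set
   T containing them, and shifting that piece hides x. *)

Definition row_support (F : fieldType) (k b : nat) (c : 'M[F]_(k, b)) : {set 'I_k} :=
  [set j | row j c != 0].

Lemma code_dist_geP (F : fieldType) (k b d : nat) (C : {vspace 'M[F]_(k, b)}) :
  code_dist_ge C d <->
  (forall c, c \in C -> c != 0 -> (d <= #|row_support c|)%N).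
Proof.
have suppB (c c' : 'M[F]_(k, b)) :
    row_support (c - c') = [set j | row j c != row j c'].
  by apply/setP => j; rewrite !inE linearB subr_eq0.
split=> [dist c Cc nz | dist c c' Cc Cc' ne].
  by rewrite -[c]subr0 suppB; exact: dist (mem0v C) nz.
by rewrite -suppB; apply: dist; [rewrite memvB | rewrite subr_eq0].
Qed.

Lemma code_dist_le (F : fieldType) (k b d : nat) (C : {vspace 'M[F]_(k, b)}) :
  C != 0%VS -> code_dist_ge C d -> (d <= k)%N.
Proof.
move=> nzC /code_dist_geP dist; rewrite -vpick0 in nzC.
by apply: leq_trans (dist _ (memv_pick C) nzC) _; rewrite -[k in (_ <= k)%N]card_ord max_card.
Qed.

Lemma code_dim_ge (F : fieldType) (k b l : nat) (C : {vspace 'M[F]_(k, b)}) :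
  (0 < k * b)%N -> l%:R / (k * b)%:R <= code_rate C -> (l <= \dim C)%N.
Proof.
by move=> kb_gt0; rewrite /code_rate mulnC ler_pM2r ?invr_gt0 ?ltr0n ?ler_nat // mulnC.
Qed.

Lemma shareD (F : fieldType) k (S : linShare F k) j x y r s :
  share S j (x + y) (r + s) = share S j x r + share S j y s.
Proof. by rewrite /share scalerDl mulmxDl addrACA. Qed.

Lemma t_private_of_null_shares (F : finFieldType) k (S : linShare F k) t :
  (forall T : {set 'I_k}, (#|T| <= t)%N ->
     forall y, exists d, forall j, j \in T -> share S j y d = 0) ->
  t_private S t.
Proof.
move=> null T leTt x x' v; have [d null_d] := null T leTt (x' - x).
rewrite -(card_preimset _ (addIr (- d))); congr #|pred_of_set _|.
apply/setP => r; rewrite !inE; apply: eq_forallb_in => j Tj.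
have -> : share S j x' r = share S j x (r - d) + share S j (x' - x) d.
  by rewrite -shareD [x + _]addrC !subrK.
by rewrite null_d // addr0.
Qed.

Lemma t_private_share_agree (F : finFieldType) k (S : linShare F k) t
    (T : {set 'I_k}) :
  t_private S t -> (#|T| <= t)%N -> forall x x' r',
  exists r, forall j, j \in T -> share S j x r = share S j x' r'.
Proof.
move=> priv leTt x x' r'.
have : (0 < #|[set r | [forall j in T, share S j x r == share S j x' r']]|)%N.
  rewrite (priv T leTt x x'); apply/card_gt0P; exists r'.
  by rewrite inE; apply/forall_inP.
by case/card_gt0P => r; rewrite inE => /forall_inP agree; exists r => j /agree/eqP.
Qed.

Definition recon_code_gen (F : fieldType) (k l b : nat) (Rc : 'I_k -> 'M[F]_(b, l))
  : 'M[F]_(l, k * b) := \matrix_i mxvec (\matrix_(j, p) Rc j p i).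

Lemma row_recon_codeword (F : fieldType) (k l b : nat) (Rc : 'I_k -> 'M[F]_(b, l))
    (z : 'rV[F]_l) j :
  row j (vec_mx (z *m recon_code_gen Rc)) = z *m (Rc j)^T.
Proof.
by apply/rowP => p; rewrite !mxE; apply: eq_bigr => i _; rewrite !mxE mxvecE mxE.
Qed.

Lemma linHSS_codeword_eq0 (F : finFieldType) (k t l b : nat) (S : linShare F k)
    (Ev : forall j : 'I_k, ('I_l -> 'rV[F]_(sh_s S j)) -> 'rV[F]_b)
    (Rc : 'I_k -> 'M[F]_(b, l)) (z : 'rV[F]_l) :
  linHSS_concat t S Ev Rc ->
  (#|row_support (vec_mx (z *m recon_code_gen Rc))| <= t)%N -> z = 0.
Proof.
move=> [priv correct]; set T := row_support _ => leTt.
have dual x r : (\row_i x i) *m z^T =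
    \sum_(j in T) Ev j (fun i => share S j (x i) (r i)) *m (z *m (Rc j)^T)^T.
  rewrite -(correct x r) mulmx_suml (bigID (mem T)) /= [X in _ + X]big1 ?addr0.
    by apply: eq_bigr => j _; rewrite trmx_mul trmxK mulmxA.
  move=> j; rewrite inE negbK row_recon_codeword => /eqP/(congr1 trmx).
  by rewrite trmx_mul trmxK trmx0 -mulmxA => ->; rewrite mulmx0.
have dual0 x : (\row_i x i) *m z^T = 0.
  (* by privacy, the shares seen by T can be those of the all-zero input *)
  have /fin_all_exists[r agree] := fun i =>
    t_private_share_agree priv leTt (x i) 0 0.
  have row0 : \row_(i < l) (0 : F) = 0 by apply/rowP => i; rewrite !mxE.
  rewrite (dual x r) -[RHS](mul0mx _ z^T) -row0 (dual (fun=> 0) (fun=> 0)).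
  apply: eq_bigr => j Tj; congr (Ev j _ *m _).
  by apply: functional_extensionality => i; exact: agree.
apply/rowP => i; have /matrixP/(_ 0 0) := dual0 (fun i' => (i' == i)%:R).
rewrite !mxE (bigD1 i) //= big1 => [|i' /negbTE]; last by rewrite !mxE => ->; rewrite mul0r.
by rewrite !mxE eqxx mul1r addr0.
Qed.

Lemma linHSS_concat_code (F : finFieldType) (k t l b : nat) (S : linShare F k)
    (Ev : forall j : 'I_k, ('I_l -> 'rV[F]_(sh_s S j)) -> 'rV[F]_b)
    (Rc : 'I_k -> 'M[F]_(b, l)) :
  linHSS_concat t S Ev Rc ->
  exists C : {vspace 'M[F]_(k, b)},
    l%:R / (k * b)%:R <= code_rate C /\ code_dist_ge C t.+1.
Proof.
move=> hss; pose f := linfun (vec_mx \o mulmxr (recon_code_gen Rc)).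
have support_gt z : z != 0 -> (t < #|row_support (f z)|)%N.
  by apply: contraNT; rewrite -leqNgt lfunE => /(linHSS_codeword_eq0 hss) ->.
have ker0 : lker f = 0%VS.
  apply/eqP; rewrite -subv0; apply/subvP => z; rewrite memv_ker memv0 => /eqP fz0.
  apply/negPn/negP => /support_gt; rewrite fz0.
  suff -> : row_support (0 : 'M[F]_(k, b)) = set0 by rewrite cards0.
  by apply/setP => j; rewrite !inE row0 eqxx.
exists (limg f); split.
  by rewrite /code_rate limg_dim_eq ?ker0 ?capv0 // dimvf /dim /= mul1n mulnC.
apply/code_dist_geP => _ /memv_imgP[z _ ->] nz; apply: support_gt.
by apply: contraNneq nz => ->; rewrite linear0.
Qed.

Lemma code_generator (F : fieldType) (k b l : nat) (C : {vspace 'M[F]_(k, b)}) :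
  (l <= \dim C)%N ->
  exists2 G : 'M[F]_(l, k * b), row_free G & forall v, vec_mx (v *m G) \in C.
Proof.
move=> leLC; have size_X : size (take l (vbasis C)) = l by rewrite size_takel ?size_tuple.
pose X : l.-tuple _ := Tuple (introT eqP size_X).
have X_free : free X.
  apply: (catl_free (Y := drop l (vbasis C))); rewrite /= cat_take_drop.
  exact: basis_free (vbasisP C).
pose G : 'M[F]_(l, k * b) := \matrix_i mxvec X`_i.
have vec_mxG (v : 'rV_l) : vec_mx (v *m G) = \sum_i v 0 i *: X`_i.
  by rewrite mulmx_sum_row linear_sum; apply: eq_bigr => i _; rewrite rowK linearZ /= mxvecK.
exists G => [|v]; last first.
  rewrite vec_mxG; apply: memv_suml => i _; apply/memvZ/vbasis_mem/mem_take.
  by apply: mem_nth; rewrite size_X.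
apply/inj_row_free => v /(congr1 vec_mx); rewrite vec_mxG linear0.
by move/freeP: X_free => /[apply] v0; apply/rowP => i; rewrite v0 mxE.
Qed.

Definition keep_rows_mx (F : fieldType) (k b : nat) (T : {set 'I_k}) : 'M[F]_(k * b) :=
  diag_mx (mxvec (\matrix_(j, p) (j \notin T)%:R)).
Arguments keep_rows_mx {F k} b T.

Lemma row_vec_mx_keep_rows (F : fieldType) (k b : nat) (T : {set 'I_k})
    (u : 'rV[F]_(k * b)) j :
  row j (vec_mx (u *m keep_rows_mx b T)) = if j \in T then 0 else row j (vec_mx u).
Proof.
apply/rowP => p; rewrite mul_mx_diag !mxE mxvecE mxE.
by case: (j \in T); rewrite ?mxE ?mulr0 ?mulr1.
Qed.

Definition gen_recon (F : fieldType) (k b l : nat) (G : 'M[F]_(l, k * b)) (j : 'I_k)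
  : 'M[F]_(b, l) := \matrix_(p, i) G i (mxvec_index j p).

Lemma sum_row_mul_gen_recon (F : fieldType) (k b l : nat) (G : 'M[F]_(l, k * b))
    (w : 'M[F]_(k, b)) :
  \sum_j row j w *m gen_recon G j = mxvec w *m G^T.
Proof.
apply/rowP => i; rewrite summxE !mxE (reindex _ (curry_mxvec_bij k b)) /=.
under eq_bigr do rewrite !mxE.
by rewrite pair_bigA; apply: eq_bigr => -[j p] _ /=; rewrite !mxE mxvecE.
Qed.

Section CodeLift.
Variables (F : fieldType) (k b l t : nat) (C : {vspace 'M[F]_(k, b)}).
Variable G : 'M[F]_(l, k * b).
Hypotheses (G_free : row_free G) (G_code : forall v, vec_mx (v *m G) \in C).
Hypothesis C_dist : code_dist_ge C t.+1.

Lemma keep_rows_gen_free (T : {set 'I_k}) :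
  (#|T| <= t)%N -> row_free (G *m keep_rows_mx b T).
Proof.
move=> leTt; apply/inj_row_free => v vGK0.
suff vG0 : vec_mx (v *m G) = 0.
  by apply/eqP; rewrite -(mulmx_free_eq0 _ G_free) -[v *m G]vec_mxK vG0 linear0.
apply/eqP/negPn/negP => /(iffLR (code_dist_geP _ _) C_dist _ (G_code v)).
rewrite ltnNge => /negP; apply; apply/(leq_trans _ leTt)/subset_leq_card/subsetP => j.
rewrite inE; apply: contraR => Tj.
have := row_vec_mx_keep_rows T (v *m G) j.
by rewrite -mulmxA vGK0 (negbTE Tj) linear0 row0 => <-.
Qed.

(* pinvmx solves mxvec w *m (G *m K_T)^T = z; masking by K_T makes w vanish on T. *)
Definition code_lift (T : {set 'I_k}) (z : 'rV[F]_l) : 'M[F]_(k, b) :=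
  vec_mx (z *m pinvmx (G *m keep_rows_mx b T)^T *m keep_rows_mx b T).

Lemma code_lift_row0 (T : {set 'I_k}) z j : j \in T -> row j (code_lift T z) = 0.
Proof. by move=> Tj; rewrite row_vec_mx_keep_rows Tj. Qed.

Lemma recon_code_lift (T : {set 'I_k}) z : (#|T| <= t)%N ->
  \sum_j row j (code_lift T z) *m gen_recon G j = z.
Proof.
move=> leTt; rewrite sum_row_mul_gen_recon vec_mxK -mulmxA.
have -> : keep_rows_mx b T *m G^T = (G *m keep_rows_mx b T)^T.
  by rewrite trmx_mul tr_diag_mx.
rewrite mulmxKpV // submx_full // /row_full mxrank_tr.
exact: keep_rows_gen_free.
Qed.
End CodeLift.

Lemma exists_superset_card (k n : nat) (T : {set 'I_k}) :
  (#|T| <= n)%N -> (n <= k)%N -> exists2 T' : {set 'I_k}, T \subset T' & #|T'| = n.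
Proof.
elim: n => [|n IHn] leTn lenk; first by exists T => //; apply/eqP; rewrite -leqn0.
have [eqTn | neTn] := eqVneq #|T| n.+1; first by exists T.
have leTn' : (#|T| <= n)%N by rewrite -ltnS ltn_neqAle neTn.
have [T' subTT' cardT'] := IHn leTn' (ltnW lenk).
have /card_gt0P[y] : (0 < #|~: T'|)%N by rewrite cardsCs setCK card_ord cardT' subn_gt0.
rewrite inE => T'y; exists (y |: T'); first exact: subset_trans subTT' (subsetUr _ _).
by rewrite cardsU1 T'y cardT'.
Qed.

Lemma exists_pick_tsub (k t : nat) :
  (t <= k)%N -> exists T0 : tsub k t, [pick T : tsub k t] = Some T0.
Proof.
move=> letk; have le0t : (#|@set0 'I_k| <= t)%N by rewrite cards0.
have [T _ cardT] := exists_superset_card le0t letk.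
case: pickP => [T0 _|none]; first by exists T0.
by have := none (exist _ T (introT eqP cardT)).
Qed.

Section CNFSharing.
Variables (F : fieldType) (k t : nat) (T0 : tsub k t).
Hypothesis pick_T0 : [pick T : tsub k t] = Some T0.

Definition cnf_piece (x : F) (r : 'rV[F]_#|{: tsub k t}|) (T : tsub k t) : F :=
  if T == T0 then x - \sum_(m | enum_val m != T0) r 0 m else r 0 (enum_rank T).

Lemma cnf_shareE j x r i :
  share (cnf_share F k t) j x r 0 i = cnf_piece x r (enum_val i).
Proof.
rewrite /share /cnf_piece !mxE pick_T0 (inj_eq Some_inj) [T0 == _]eq_sym.
set T := enum_val i; case: eqP => [eT | neT].
  rewrite mulr1 -sumrN [in RHS]big_mkcond; congr (_ + _); apply: eq_bigr => m _.
  rewrite !mxE pick_T0 !(inj_eq Some_inj) -/T eT eqxx eq_sym.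
  by case: eqP; rewrite ?mulr0 ?mulrN1.
rewrite mulr0 add0r (bigD1 (enum_rank T)) //= big1 => [|m neTm]; rewrite !mxE pick_T0.
  by rewrite (inj_eq Some_inj) -/T eq_sym (introF eqP neT) enum_rankK eqxx mulr1 addr0.
rewrite (inj_eq Some_inj) -/T eq_sym (introF eqP neT) (_ : _ == _ = false) ?mulr0 //.
by apply: contraNF neTm => /eqP <-; rewrite enum_valK.
Qed.

Lemma sum_cnf_piece x r : \sum_T cnf_piece x r T = x.
Proof.
rewrite (bigD1 T0) //= {1}/cnf_piece eqxx.
rewrite (reindex (@enum_rank (tsub k t))) /=; last first.
  by exists enum_val => m _; rewrite ?enum_valK ?enum_rankK.
under eq_bigl do rewrite enum_rankK.
under [X in _ + X]eq_bigr => T /negbTE neT do rewrite /cnf_piece neT.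
by rewrite subrK.
Qed.

(* This sharing puts y on the single piece x_Ts, which no member of Ts holds. *)
Lemma cnf_share_shift0 (Ts : tsub k t) y j : j \in val Ts ->
  share (cnf_share F k t) j y (\row_m (if m == enum_rank Ts then y else 0)) = 0.
Proof.
move=> Ts_j; apply/rowP => i; rewrite cnf_shareE mxE /cnf_piece.
have neTs : enum_val i != Ts.
  by apply: contraTneq (enum_valP i) => ->; rewrite inE Ts_j.
case: eqP => [eT0 | _]; last by rewrite mxE (inj_eq enum_rank_inj) (negbTE neTs).
rewrite (bigD1 (enum_rank Ts)) ?enum_rankK -?eT0 1?eq_sym //= mxE eqxx big1 ?addr0 ?subrr //.
by move=> m /andP[_ /negbTE ne]; rewrite mxE ne.
Qed.
End CNFSharing.

Lemma cnf_share_private (F : finFieldType) (k t : nat) :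
  (t <= k)%N -> t_private (cnf_share F k t) t.
Proof.
move=> letk; have [T0 pick_T0] := exists_pick_tsub letk.
apply: t_private_of_null_shares => T leTt y.
have [Ts subTTs cardTs] := exists_superset_card leTt letk.
pose Ts' : tsub k t := exist _ Ts (introT eqP cardTs).
exists (\row_m (if m == enum_rank Ts' then y else 0)) => j Tj.
exact: (cnf_share_shift0 (Ts := Ts') pick_T0 y (subsetP subTTs j Tj)).
Qed.

Lemma card_cnf_part (k t : nat) (j : 'I_k) : #|cnf_part t j| = 'C(k.-1, t).
Proof.
rewrite -[k in k.-1]card_ord -(cardsC1 j) -cards_draws -(card_imset _ val_inj).
congr #|pred_of_set _|; apply/setP => A; rewrite !inE.
apply/imsetP/andP => [[T] | [subA cardA]].
  rewrite inE => T'j ->; split; last exact: valP T.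
  by apply/subsetP => i Ti; rewrite !inE; apply: contraNneq T'j => <-.
exists (exist _ A cardA) => //; rewrite inE /=.
by apply: contraL subA => Aj; apply/subsetPn; exists j; rewrite ?inE ?eqxx.
Qed.

Lemma upload_size_cnf (F : finFieldType) (k t l : nat) :
  upload_size (cnf_share F k t) l = (#|{: F}| ^ (k * l * 'C(k.-1, t)))%N.
Proof.
rewrite /upload_size; under eq_bigr do under eq_bigr do rewrite card_mx /= card_cnf_part mul1n.
by rewrite !prod_nat_const !card_ord -!expnM mulnC.
Qed.

Section CNFEval.
Variables (F : fieldType) (k t l b : nat) (T0 : tsub k t).
Hypothesis pick_T0 : [pick T : tsub k t] = Some T0.
Variables (lift : {set 'I_k} -> 'rV[F]_l -> 'M[F]_(k, b)) (Rc : 'I_k -> 'M[F]_(b, l)).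
Hypothesis lift_row0 : forall (T : tsub k t) z j, j \in val T -> row j (lift (val T) z) = 0.
Hypothesis recon_lift : forall (T : tsub k t) z, \sum_j row j (lift (val T) z) *m Rc j = z.

Definition cnf_eval j (s : 'I_l -> 'rV[F]_(sh_s (cnf_share F k t) j)) : 'rV[F]_b :=
  \sum_(m < #|cnf_part t j|) row j (lift (val (enum_val m)) (\row_i s i 0 m)).
Arguments cnf_eval : clear implicits.

Lemma cnf_eval_correct : concat_correct cnf_eval Rc.
Proof.
move=> x r; pose X T := \row_i cnf_piece T0 (x i) (r i) T.
have evalE j : cnf_eval j (fun i => share (cnf_share F k t) j (x i) (r i)) =
    \sum_T row j (lift (val T) (X T)).
  rewrite /cnf_eval (eq_bigr (fun m => row j (lift (val (enum_val m)) (X (enum_val m))))).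
    rewrite -(big_enum_val (fun T => row j (lift (val T) (X T)))) big_mkcond /=.
    apply: eq_bigr => T _; case: ifP => // /negbT.
    by rewrite inE negbK => /lift_row0 ->.
  move=> m _; congr (row j (lift _ _)); apply/rowP => i.
  by rewrite [LHS]mxE [RHS]mxE (cnf_shareE pick_T0).
under eq_bigr do rewrite evalE mulmx_suml.
rewrite exchange_big /=; under eq_bigr do rewrite recon_lift.
by apply/rowP => i; rewrite summxE mxE; under eq_bigr do rewrite mxE; exact: sum_cnf_piece.
Qed.
End CNFEval.
Arguments cnf_eval {F k} t {l b} lift j s.

Lemma code_cnf_linHSS (F : finFieldType) (k t l b : nat) (C : {vspace 'M[F]_(k, b)}) :
  (l <= \dim C)%N -> code_dist_ge C t.+1 -> (t <= k)%N ->
  exists (Ev : forall j : 'I_k, ('I_l -> 'rV[F]_(sh_s (cnf_share F k t) j)) -> 'rV[F]_b)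
         (Rc : 'I_k -> 'M[F]_(b, l)),
    linHSS_concat t (cnf_share F k t) Ev Rc.
Proof.
move=> leLC dist letk; have [G G_free G_code] := code_generator leLC.
have [T0 pick_T0] := exists_pick_tsub letk.
exists (cnf_eval t (code_lift G)), (gen_recon G); split; first exact: cnf_share_private.
apply: (cnf_eval_correct pick_T0) => [T z j | T z]; first exact: code_lift_row0.
by apply: (recon_code_lift G_free G_code dist); rewrite (eqP (valP T)).
Qed.

Theorem mainTheorem3 (F : finFieldType) (l k t b : nat)
  (hl : (0 < l)%N) (hk : (0 < k)%N) (ht : (0 < t)%N)
  (hb : (l%:R / k%:R < b%:R :> rat)) :
  ((exists (S : linShare F k)
           (Ev : forall j : 'I_k, ('I_l -> 'rV[F]_(sh_s S j)) -> 'rV[F]_b)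
           (Rc : 'I_k -> 'M[F]_(b, l)),
       linHSS_concat t S Ev Rc)
   <->
   (exists C : {vspace 'M[F]_(k, b)},
       l%:R / (k * b)%:R <= code_rate C /\ code_dist_ge C t.+1))
  /\
  ((exists C : {vspace 'M[F]_(k, b)},
       l%:R / (k * b)%:R <= code_rate C /\ code_dist_ge C t.+1) ->
   exists (Ev : forall j : 'I_k, ('I_l -> 'rV[F]_(sh_s (cnf_share F k t) j)) -> 'rV[F]_b)
          (Rc : 'I_k -> 'M[F]_(b, l)),
     linHSS_concat t (cnf_share F k t) Ev Rc /\
     upload_size (cnf_share F k t) l = (#|{: F}| ^ (k * l * 'C(k.-1, t)))%N).
Proof.
have kb_gt0 : (0 < k * b)%N.
  rewrite muln_gt0 hk lt0n; apply: contraTneq hb => ->.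
  by rewrite -leNgt divr_ge0 ?ler0n.
have cnf_of_code (C : {vspace 'M[F]_(k, b)}) :
    l%:R / (k * b)%:R <= code_rate C -> code_dist_ge C t.+1 ->
    exists (Ev : forall j, ('I_l -> _) -> 'rV[F]_b) Rc,
      linHSS_concat t (cnf_share F k t) Ev Rc.
  move=> rate dist; have leLC := code_dim_ge kb_gt0 rate.
  have nzC : C != 0%VS by rewrite -dimv_eq0 -lt0n (leq_trans hl leLC).
  exact: code_cnf_linHSS leLC dist (ltnW (code_dist_le nzC dist)).
split; first split.
- by case=> S [Ev [Rc /linHSS_concat_code]].
- by case=> C [/cnf_of_code/[apply] -[Ev [Rc hss]]]; exists (cnf_share F k t), Ev, Rc.
- case=> C [/cnf_of_code/[apply] -[Ev [Rc hss]]]; exists Ev, Rc.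
  by split=> //; exact: upload_size_cnf.
Qed.
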